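(* Let $X$ be an infinite-dimensional II-polyhedral real Banach space. Then $B_X$ does not have slices of arbitrarily small diameter; that is, there exists $\delta>0$ such that every slice of $B_X$ has diameter at least $\delta$.
   Context: All Banach spaces are real. For a Banach space $X$, $B_X$ denotes the closed unit ball, $X^*$ the dual, and $Ext(B_{X^*})$ the set of extreme points of $B_{X^*}$. For a set $A\subseteq X^*$, $A'$ denotes the set of accumulation points of $A$ in the weak$^*$ topology of $X^*$. $X$ is called II-polyhedral if there exists $0<r<1$ such that $(Ext B_{X^*})'\subseteq rB_{X^*}$. A slice of $B_X$ is a set of the form $S(B_X,f,\alpha)=\{x\in B_X: f(x)>\|f\|-\alpha\}$ with $f\in X^*\setminus\{0\}$ and $\alpha>0$. *)

From HB Require Import structures.
From mathcomp Require Import all_boot all_order all_algebra.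
From mathcomp Require Import all_classical all_reals all_analysis.
Set Implicit Arguments. Unset Strict Implicit. Unset Printing Implicit Defensive.
Import Order.TTheory GRing.Theory Num.Theory.
Import numFieldNormedType.Exports.
Local Open Scope classical_set_scope.
Local Open Scope ring_scope.

Section Defs.
Context {R : realType} {X : normedModType R}.

Definition is_dual (f : X -> R) : Prop :=
  (forall (a : R) (x y : X), f (a *: x + y) = a * f x + f y) /\ continuous f.

Definition dnorm (f : X -> R) : R :=
  sup [set r : R | exists x : X, `|x| <= 1 /\ r = `|f x|].

Definition dual_ball : set (X -> R) := [set f | is_dual f /\ dnorm f <= 1].

Definition Ext_dual_ball : set (X -> R) :=
  [set f | dual_ball f /\
     forall g h : X -> R, dual_ball g -> dual_ball h ->
       (forall x, f x = (g x + h x) / 2) -> g = h].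

(* Weak* accumulation points of A ⊆ X^*: every basic weak* neighbourhood
   { g : |g x_i - f x_i| < eps, i < n } of f meets A \ {f}. *)
Definition wstar_acc (A : set (X -> R)) : set (X -> R) :=
  [set f | is_dual f /\
     forall (n : nat) (xs : 'I_n -> X) (eps : R), 0 < eps ->
       exists g, A g /\ g <> f /\ forall i, `|g (xs i) - f (xs i)| < eps].

Definition II_polyhedral : Prop :=
  exists r : R, 0 < r < 1 /\
    forall f, wstar_acc Ext_dual_ball f -> dnorm f <= r.

Definition finite_dimensional : Prop :=
  exists (n : nat) (e : 'I_n -> X),
    forall x : X, exists c : 'I_n -> R, x = \sum_(i < n) c i *: e i.

Definition slice (f : X -> R) (alpha : R) : set X :=
  [set x | `|x| <= 1 /\ dnorm f - alpha < f x].

Definition diam (S : set X) : R :=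
  sup [set r : R | exists x y, S x /\ S y /\ r = `|x - y|].

End Defs.

From HB Require Import structures.
From mathcomp Require Import all_boot all_order all_algebra.
From mathcomp Require Import all_classical all_reals all_analysis finmap.
From mathcomp Require Import ring lra.
Import Order.TTheory GRing.Theory Num.Theory.
Import numFieldNormedType.Exports.
Local Open Scope classical_set_scope.
Local Open Scope ring_scope.

(* By II-polyhedrality the weak* accumulation points of Ext B_{X^*} have norm at most
   r < 1, so for a point x of the slice and r < s < 1, Banach-Alaoglu leaves only
   finitely many extreme functionals e with e x >= s.  In infinite dimension some unit
   vector y is killed by all of them and by the functional defining the slice.  Since
   the norm of every vector is attained at an extreme functional (Hahn-Banach and
   Krein-Milman), the segment x + c y, |c| <= 1 - s, stays in the ball and hence in
   the slice, whose diameter is therefore at least 2 (1 - s) = 1 - r. *)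

Lemma ex_minimal (T : Type) (P : set T) (le : T -> T -> Prop) :
  P !=set0 -> (forall x, le x x) -> (forall x y z, le x y -> le y z -> le x z) ->
  (forall C, C `<=` P -> C !=set0 -> total_on C le ->
     exists2 m, P m & forall c, C c -> le m c) ->
  exists2 m, P m & forall x, P x -> le x m -> le m x.
Proof.
move=> [t0 Pt0] le_xx le_xyz chain_lb.
pose U := {t | P t}.
pose geU (s t : U) := `[< le (sval t) (sval s) >].
have [[m Pm] m_min] : exists m : U, premaximal geU m.
  apply: (ZL_preorder (exist _ t0 Pt0)).
  - by move=> t; apply/asboolP.
  - by move=> r s t /asboolP rs /asboolP st; apply/asboolP; exact: le_xyz st rs.
  move=> A A_total; have [[a Aa]|A0] := pselect (A !=set0); last first.
    by exists (exist _ t0 Pt0) => s As; exfalso; apply: A0; exists s.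
  have [|||lb Plb lbA] := chain_lb [set sval s | s in A].
  - by move=> _ [s _ <-]; exact: svalP.
  - by exists (sval a), a.
  - move=> _ _ [s As <-] [t At <-].
    by case: (A_total s t As At) => /asboolP; [right|left].
  by exists (exist _ lb Plb) => s As; apply/asboolP; apply: lbA; exists s.
by exists m => // x Px lexm; apply/asboolP/(m_min (exist _ x Px)); apply/asboolP.
Qed.

Section Linear.
Context {R : realType} {X : normedModType R}.

Definition lin (f : X -> R) := forall (a : R) (x y : X), f (a *: x + y) = a * f x + f y.

Lemma lin0 f : lin f -> f 0 = 0.
Proof.
move=> fl; have := fl 1 0 0; rewrite scaler0 addr0 mul1r => h.
by apply: (@addrI _ (f 0)); rewrite addr0 -h.
Qed.

Lemma linZ f a x : lin f -> f (a *: x) = a * f x.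
Proof. by move=> fl; have := fl a x 0; rewrite addr0 lin0 // addr0. Qed.

Lemma linD f x y : lin f -> f (x + y) = f x + f y.
Proof. by move=> fl; have := fl 1 x y; rewrite scale1r mul1r. Qed.

Lemma linN f x : lin f -> f (- x) = - f x.
Proof. by move=> fl; rewrite -scaleN1r linZ // mulN1r. Qed.

Lemma linB f x y : lin f -> f (x - y) = f x - f y.
Proof. by move=> fl; rewrite linD // linN. Qed.

Lemma dual_bounded (f : X -> R) : is_dual f -> exists2 C, 0 < C & forall x, `|f x| <= C * `|x|.
Proof.
move=> [fl fc]; have := fc 0; move=> /cvgrPdist_lt /(_ 1 ltr01).
rewrite lin0 // => /nbhs_norm0P [e e0 He].
exists (2 / e); first by rewrite divr_gt0.
move=> x; have [->|x0] := eqVneq x 0; first by rewrite lin0 // !normr0 mulr0.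
have nx : 0 < `|x| by rewrite normr_gt0.
have k0 : 0 < e / 2 / `|x| by rewrite !divr_gt0.
have ny : `|(e / 2 / `|x|) *: x| < e.
  by rewrite normrZ gtr0_norm // divfK ?gt_eqF // ltr_pdivrMr // ltr_pMr // ltr1n.
have := He _ ny; rewrite /= sub0r normrN linZ // normrM (gtr0_norm k0) => /ltW.
rewrite -(ler_pM2r (_ : 0 < 2 / e)) ?divr_gt0 // mul1r.
have -> : e / 2 / `|x| * `|f x| * (2 / e) = `|f x| / `|x| by field; rewrite ?gt_eqF.
by rewrite ler_pdivrMr.
Qed.

Lemma has_ubound_dnorm (f : X -> R) : is_dual f ->
  has_ubound [set r : R | exists x : X, `|x| <= 1 /\ r = `|f x|].
Proof.
move=> /dual_bounded [C C0 HC]; exists C => _ [x [x1 ->]].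
by apply: (le_trans (HC x)); rewrite ler_piMr // ltW.
Qed.

Lemma ler_dnorm {f : X -> R} {x : X} : is_dual f -> `|x| <= 1 -> `|f x| <= dnorm f.
Proof. by move=> fd x1; apply: ub_le_sup; [exact: has_ubound_dnorm|exists x]. Qed.

Lemma dnorm_le (f : X -> R) c : (forall x, `|x| <= 1 -> `|f x| <= c) -> dnorm f <= c.
Proof.
move=> H; apply: ge_sup; first by exists `|f 0|, 0; rewrite normr0 ler01.
by move=> _ [x [x1 ->]]; exact: H.
Qed.

Lemma dual_ball_le_norm {f : X -> R} (x : X) : dual_ball f -> `|f x| <= `|x|.
Proof.
move=> [fd f1]; have [fl _] := fd.
have [->|x0] := eqVneq x 0; first by rewrite lin0 ?normr0.
have nx : 0 < `|x| by rewrite normr_gt0.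
have y1 : `|(`|x|^-1 *: x)| <= 1 by rewrite normrZ normfV normr_id mulVf ?gt_eqF.
have := le_trans (ler_dnorm fd y1) f1.
by rewrite linZ // normrM normfV normr_id ler_pdivrMl // mulr1.
Qed.

Lemma lin_bounded_dual (f : X -> R) c : lin f -> (forall x, `|f x| <= c * `|x|) -> is_dual f.
Proof.
move=> fl fc; split => // x0; apply/cvgrPdist_lt => eps e0.
have c1 : 0 < `|c| + 1 by rewrite ltr_pwDr.
apply/nbhs_normP; exists (eps / (`|c| + 1)); first by rewrite /= divr_gt0.
move=> t /=; rewrite -linB // => h; apply: (le_lt_trans (fc _)).
apply: (le_lt_trans (ler_wpM2r (normr_ge0 _) (ler_norm c))).
apply: (le_lt_trans (ler_wpM2r (normr_ge0 _) (_ : `|c| <= `|c| + 1))); first by rewrite lerDl.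
by rewrite mulrC -ltr_pdivlMr.
Qed.

Lemma lin_contraction_dual_ball (f : X -> R) : lin f -> (forall x, `|f x| <= `|x|) -> dual_ball f.
Proof.
move=> fl f1; have fd : is_dual f by apply: (@lin_bounded_dual _ 1) => // x; rewrite mul1r.
by split => //; apply: dnorm_le => x x1; exact: le_trans (f1 x) x1.
Qed.

Lemma Ext_dual_ball_lin {e : X -> R} : Ext_dual_ball e -> lin e.
Proof. by move=> [[[]]]. Qed.

End Linear.

Section HahnBanach.
Context {R : realType} {X : normedModType R}.

Definition sublin (q : X -> R) := (forall x y, q (x + y) <= q x + q y) /\
  (forall (a : R) x, 0 < a -> q (a *: x) = a * q x).

Lemma sublin0 q : sublin q -> q 0 = 0.
Proof. by move=> [_ qZ]; have := qZ 2 0 (ltr0Sn _ 1); rewrite scaler0; lra. Qed.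

Lemma sublinZ_ge0 q t x : sublin q -> 0 <= t -> q (t *: x) = t * q x.
Proof.
move=> hq; rewrite le_eqVlt => /orP[/eqP <-|t0]; last by case: hq => _ ->.
by rewrite scale0r mul0r sublin0.
Qed.

Lemma sublin_oppN_le {q} x : sublin q -> - q (- x) <= q x.
Proof. by move=> hq; have := hq.1 x (- x); rewrite subrr sublin0 //; lra. Qed.

Lemma sublin_lin q : sublin q -> (forall a, q (- a) <= - q a) -> lin q.
Proof.
move=> hq qN_le.
have qN a : q (- a) = - q a.
  by apply/eqP; rewrite eq_le qN_le /=; have := sublin_oppN_le a hq; lra.
have qD x y : q (x + y) = q x + q y.
  apply/eqP; rewrite eq_le hq.1 /=; have := hq.1 (- x) (- y).
  by rewrite -opprD !qN; lra.
move=> a x y; rewrite qD; congr (_ + _).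
have [a0|a0] := leP 0 a; first by rewrite sublinZ_ge0.
have -> : a *: x = (- a) *: (- x) by rewrite scaleNr scalerN opprK.
by rewrite sublinZ_ge0 ?oppr_ge0 ?ltW // qN mulrN mulNr opprK.
Qed.

(* [qdir q a x = inf_{t >= 0} q (x + t a) - t q a] is a sublinear minorant of [q]
   with [qdir q a (- a) <= - q a]: a minimal sublinear functional is therefore linear. *)
Definition qdir (q : X -> R) (a x : X) : R :=
  inf [set v | exists2 t : R, 0 <= t & v = q (x + t *: a) - t * q a].

Lemma qdir_le_shift {q} a x {t} : sublin q -> 0 <= t ->
  qdir q a x <= q (x + t *: a) - t * q a.
Proof.
move=> hq t0; apply: ge_inf; last by exists t.
exists (- q (- x)) => _ [s s0 ->].
by have := hq.1 (x + s *: a) (- x); rewrite addrC addKr sublinZ_ge0 //; lra.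
Qed.

Lemma qdir_ge q a x c : (forall t, 0 <= t -> c <= q (x + t *: a) - t * q a) -> c <= qdir q a x.
Proof.
move=> H; apply: lb_le_inf; first by exists (q (x + 0 *: a) - 0 * q a), 0.
by move=> _ [t t0 ->]; exact: H.
Qed.

Lemma qdir_le {q} a x : sublin q -> qdir q a x <= q x.
Proof. by move=> hq; have := qdir_le_shift a x hq (lexx 0); rewrite scale0r addr0 mul0r subr0. Qed.

Lemma qdir_oppr {q} a : sublin q -> qdir q a (- a) <= - q a.
Proof.
move=> hq; have := qdir_le_shift a (- a) hq ler01.
by rewrite scale1r addNr sublin0 // mul1r sub0r.
Qed.

Lemma sublin_qdir {q} a : sublin q -> sublin (qdir q a).
Proof.
move=> hq; split.
- move=> x y; suff : qdir q a (x + y) - qdir q a y <= qdir q a x by lra.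
  apply: qdir_ge => t t0.
  suff : qdir q a (x + y) - (q (x + t *: a) - t * q a) <= qdir q a y by lra.
  apply: qdir_ge => s s0.
  have := qdir_le_shift a (x + y) hq (addr_ge0 t0 s0).
  have -> : x + y + (t + s) *: a = (x + t *: a) + (y + s *: a) by rewrite scalerDl addrACA.
  have := hq.1 (x + t *: a) (y + s *: a); lra.
- move=> l x l0; apply/eqP; rewrite eq_le; apply/andP; split.
  + rewrite -ler_pdivrMl //; apply: qdir_ge => t t0.
    rewrite ler_pdivrMl // mulrBr mulrA.
    have := qdir_le_shift a (l *: x) hq (mulr_ge0 (ltW l0) t0).
    rewrite -scalerA -scalerDr (hq.2 _ _ l0); lra.
  + apply: qdir_ge => t t0.
    have tl : 0 <= t / l by rewrite divr_ge0 // ltW.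
    have := qdir_le_shift a x hq tl; rewrite -(ler_pM2l l0) => /le_trans; apply.
    rewrite mulrBr -(hq.2 _ _ l0) scalerDr scalerA mulrCA divff ?gt_eqF // mulr1.
    by rewrite mulrA mulrCA divff ?gt_eqF // mulr1.
Qed.

Lemma sublin_norm : sublin (fun x : X => `|x|).
Proof. by split => [x y|a x a0]; [exact: ler_normD|rewrite normrZ gtr0_norm]. Qed.

Lemma sublin_chain_inf (p : X -> R) (C : set (X -> R)) : sublin p ->
  C `<=` [set q | sublin q /\ forall x, q x <= p x] -> C !=set0 ->
  total_on C (fun q1 q2 => forall x, q1 x <= q2 x) ->
  exists2 m, sublin m /\ (forall x, m x <= p x) & forall q, C q -> forall x, m x <= q x.
Proof.
move=> hp Csub [q0 Cq0] Ctot.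
pose S x := [set v : R | exists2 q, C q & v = q x].
pose m x := inf (S x).
have Slb x : has_lbound (S x).
  exists (- p (- x)) => _ [q Cq ->]; have [hq qp] := Csub _ Cq.
  by have := sublin_oppN_le x hq; have := qp (- x); lra.
have m_le q x : C q -> m x <= q x by move=> Cq; apply: ge_inf => //; exists q.
have m_ge x c : (forall q, C q -> c <= q x) -> c <= m x.
  by move=> H; apply: lb_le_inf => [|_ [q Cq ->]]; [exists (q0 x), q0|exact: H].
exists m; last by move=> q Cq x; exact: m_le.
split; last by move=> x; exact: le_trans (m_le _ _ Cq0) ((Csub _ Cq0).2 x).
split.
- move=> x y; suff : m (x + y) - m y <= m x by lra.
  apply: (m_ge) => q1 Cq1; suff : m (x + y) - q1 x <= m y by lra.
  apply: (m_ge) => q2 Cq2; suff : m (x + y) <= q1 x + q2 y by lra.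
  have [[hq1 _] [hq2 _]] := (Csub _ Cq1, Csub _ Cq2).
  case: (Ctot _ _ Cq1 Cq2) => h.
  + apply: le_trans (m_le _ _ Cq1) _; apply: le_trans (hq1.1 _ _) _; have := h y; lra.
  + apply: le_trans (m_le _ _ Cq2) _; apply: le_trans (hq2.1 _ _) _; have := h x; lra.
- move=> l x l0; apply/eqP; rewrite eq_le; apply/andP; split.
  + rewrite -ler_pdivrMl //; apply: (m_ge) => q Cq; rewrite ler_pdivrMl //.
    by rewrite -(Csub _ Cq).1.2 //; exact: m_le.
  + by apply: (m_ge) => q Cq; rewrite (Csub _ Cq).1.2 // ler_pM2l //; exact: m_le.
Qed.

Lemma ex_minimal_sublin {p : X -> R} : sublin p ->
  exists2 g, sublin g /\ (forall x, g x <= p x) &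
    forall q, sublin q -> (forall x, q x <= g x) -> forall x, g x <= q x.
Proof.
move=> hp; have [||||g [hg gp] g_min] := @ex_minimal _
  [set q | sublin q /\ forall x, q x <= p x] (fun q1 q2 => forall x, q1 x <= q2 x).
- by exists p; split.
- by move=> q x.
- by move=> q1 q2 q3 h12 h23 x; exact: le_trans (h12 x) (h23 x).
- by move=> C; exact: sublin_chain_inf.
exists g => // q hq qg; apply: g_min => //; split => // x.
exact: le_trans (qg x) (gp x).
Qed.

Lemma minimal_sublin_lin {g : X -> R} : sublin g ->
  (forall q, sublin q -> (forall x, q x <= g x) -> forall x, g x <= q x) -> lin g.
Proof.
move=> hg g_min; apply: sublin_lin => // a.
have := g_min _ (sublin_qdir a hg) (fun x => qdir_le a x hg) (- a).
by move=> /le_trans; apply; exact: qdir_oppr.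
Qed.

Lemma hahn_banach_norming (w : X) : exists2 g, dual_ball g & g w = `|w|.
Proof.
have hp := sublin_qdir w sublin_norm.
have [g [hg gp] g_min] := ex_minimal_sublin hp.
have gl := minimal_sublin_lin hg g_min.
have g_le x : g x <= `|x| by exact: le_trans (gp x) (qdir_le w x sublin_norm).
exists g.
  apply: lin_contraction_dual_ball => // x; rewrite ler_norml g_le andbT.
  by have := g_le (- x); rewrite normrN linN //; lra.
apply/eqP; rewrite eq_le g_le /=.
by have := le_trans (gp (- w)) (qdir_oppr w sublin_norm); rewrite linN //; lra.
Qed.

End HahnBanach.

Section Kernel.
Context {R : realType} {X : normedModType R}.

Definition subspace (V : set X) := V 0 /\ forall (a : R) x y, V x -> V y -> V (a *: x + y).

Definition spanned (V : set X) := exists n (e : 'I_n -> X),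
  forall v, V v -> exists c : 'I_n -> R, v = \sum_(i < n) c i *: e i.

Lemma subspace_ker V (l : X -> R) : subspace V -> lin l -> subspace (V `&` [set x | l x = 0]).
Proof.
move=> [V0 VZD] ll; split; first by split => //; exact: lin0.
by move=> a x y [Vx lx] [Vy ly]; split; [exact: VZD|rewrite /= ll lx ly mulr0 addr0].
Qed.

Lemma spanned_ker {V} {l : X -> R} : subspace V -> lin l ->
  spanned (V `&` [set x | l x = 0]) -> spanned V.
Proof.
move=> [V0 VZD] ll [n [e e_span]].
have [[u [Vu lu]]|Vker] := pselect (exists u, V u /\ l u <> 0); last first.
  exists n, e => v Vv; apply: e_span; split => //.
  by apply: contrapT => lv; apply: Vker; exists v.
pose u' := (l u)^-1 *: u.
have lu' : l u' = 1 by rewrite linZ // mulVf //; exact/eqP.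
have Vu' : V u' by rewrite /u' -[_ *: u]addr0; exact: VZD.
pose e' (i : 'I_n.+1) := if unlift ord_max i is Some j then e j else u'.
exists n.+1, e' => v Vv.
have [|c vE] := e_span (v - l v *: u').
  split; first by rewrite -scaleNr addrC; exact: VZD.
  by rewrite /= linB // linZ // lu' mulr1 subrr.
exists (fun i => if unlift ord_max i is Some j then c j else l v).
rewrite big_ord_recr /= /e' unlift_none.
have liftE (i : 'I_n) : widen_ord (leqnSn n) i = lift ord_max i.
  by apply: val_inj; rewrite /= /bump leqNgt ltn_ord.
under eq_bigr => i _ do rewrite liftE liftK.
by rewrite -vE subrK.
Qed.

Lemma spanned_common_ker (s : seq (X -> R)) V : subspace V -> {in s, forall l, lin l} ->
  (forall v, V v -> {in s, forall l, l v = 0} -> v = 0) -> spanned V.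
Proof.
elim: s V => [|l s IH] V hV s_lin V_ker.
  by exists 0%N, (fun=> 0) => v Vv; exists (fun=> 0); rewrite big_ord0; exact: V_ker.
have ll : lin l by apply: s_lin; exact: mem_head.
apply: (spanned_ker hV ll); apply: IH; first exact: subspace_ker.
  by move=> k ks; apply: s_lin; rewrite in_cons ks orbT.
move=> v [Vv lv] s_ker; apply: V_ker => // k; rewrite in_cons => /orP[/eqP ->//|].
exact: s_ker.
Qed.

Lemma ex_common_ker_nonzero {s : seq (X -> R)} : ~ @finite_dimensional R X ->
  {in s, forall l, lin l} -> exists2 y : X, y <> 0 & {in s, forall l, l y = 0}.
Proof.
move=> nfd s_lin; apply: contrapT => no_y; apply: nfd.
have [n [e e_span]] : spanned [set: X].
  apply: (@spanned_common_ker s) s_lin _ => [|v _ v_ker]; first by [].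
  by apply: contrapT => v0; apply: no_y; exists v.
by exists n, e => x; exact: e_span.
Qed.

Lemma ex_unit_common_ker (E : set (X -> R)) : ~ @finite_dimensional R X ->
  finite_set E -> E `<=` lin -> exists2 y : X, `|y| = 1 & forall l, E l -> l y = 0.
Proof.
move=> nfd /finite_fsetP[F ->] F_lin.
have [y y0 y_ker] := ex_common_ker_nonzero nfd F_lin.
have ny : 0 < `|y| by rewrite normr_gt0; exact/eqP.
exists (`|y|^-1 *: y); first by rewrite normrZ normfV normr_id mulVf ?gt_eqF.
by move=> l Fl; rewrite linZ ?(y_ker l Fl) ?mulr0 //; exact: F_lin.
Qed.

End Kernel.

Section WeakStar.
Context {R : realType} {X : normedModType R}.

Definition wclosure (S : set (X -> R)) : set (X -> R) :=
  [set g | forall n (xs : 'I_n -> X) (eps : R), 0 < eps ->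
     exists2 h, S h & forall i, `|h (xs i) - g (xs i)| < eps].

Lemma wclosureS {S T : set (X -> R)} : S `<=` T -> wclosure S `<=` wclosure T.
Proof. by move=> ST g gS n xs eps e0; have [h /ST Th hg] := gS n xs eps e0; exists h. Qed.

Lemma wclosure_eval {S g} x {eps : R} : wclosure S g -> 0 < eps -> exists2 h, S h & `|h x - g x| < eps.
Proof.
by move=> gS e0; have [h Sh hg] := gS 1%N (fun=> x) eps e0; exists h => //; exact: hg ord0.
Qed.

Lemma wclosure_ball_lin g : wclosure dual_ball g -> lin g.
Proof.
move=> g_cl a x y; apply/eqP; rewrite -subr_eq0; set d := _ - _.
apply/negP => /negP d0; have dp : 0 < `|d| by rewrite normr_gt0.
have c0 : 0 < 2 + `|a| by rewrite ltr_pwDl.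
pose xs (i : 'I_3) := nth 0 [:: x; y; a *: x + y] i.
have [h [[hl _] _] hg] := g_cl 3%N xs _ (divr_gt0 dp c0).
have := hg (@Ordinal 3 0 isT); have := hg (@Ordinal 3 1 isT); have := hg (@Ordinal 3 2 isT).
rewrite /xs /=; set e := `|d| / (2 + `|a|) => hxy hy hx.
have he : e * (2 + `|a|) = `|d| by rewrite /e divfK ?gt_eqF.
have dE : d = (g (a *: x + y) - h (a *: x + y)) - a * (g x - h x) - (g y - h y).
  by rewrite /d hl; ring.
rewrite distrC in hxy; rewrite distrC in hx; rewrite distrC in hy.
have t1 := ler_normB (g (a *: x + y) - h (a *: x + y) - a * (g x - h x)) (g y - h y).
have t2 := ler_normB (g (a *: x + y) - h (a *: x + y)) (a * (g x - h x)).
have t3 := ler_wpM2l (normr_ge0 a) (ltW hx).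
rewrite normrM in t2; rewrite -dE in t1.
have : `|d| < e * (2 + `|a|) by lra.
by rewrite he ltxx.
Qed.

Import ArrowAsProduct.

Lemma nbhs_wbox (g : X -> R) {n} (xs : 'I_n -> X) {eps : R} : 0 < eps ->
  nbhs g [set h : X -> R | forall i, `|h (xs i) - g (xs i)| < eps].
Proof.
move=> e0; have near_i i : \forall h \near g, `|h (xs i) - g (xs i)| < eps.
  have /cvgrPdist_lt /(_ eps e0) := @proj_continuous X (fun=> R) (xs i) g.
  by apply: filterS => h; rewrite distrC.
exact: (@filter_forall _ 'I_n (fun i h => `|h (xs i) - g (xs i)| < eps) _ _ near_i).
Qed.

Lemma alaoglu_directed (B : set (set (X -> R))) : B !=set0 ->
  (forall S, B S -> S !=set0 /\ S `<=` dual_ball) ->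
  (forall S T, B S -> B T -> exists2 U, B U & U `<=` S `&` T) ->
  exists2 g, dual_ball g & forall S, B S -> wclosure S g.
Proof.
move=> [S0 BS0] B_ball B_dir.
pose F := [set S : set (X -> R) | exists2 U, B U & U `<=` S].
have FF : ProperFilter F.
  apply: Build_ProperFilter_ex.
    by move=> S [U BU US]; have [[h Uh] _] := B_ball _ BU; exists h; exact: US.
  split; first by exists S0.
  - move=> S T [U BU US] [V BV VT]; have [W BW WUV] := B_dir _ _ BU BV.
    by exists W => // h /WUV[/US Sh /VT Th].
  - by move=> S T ST [U BU US]; exists U => //; exact: subset_trans ST.
have F_box : F [set h | forall x, [set` `[- `|x|, `|x|]] (h x)].
  exists S0 => // h /(B_ball _ BS0).2 hb x.
  by rewrite /= in_itv /= -ler_norml; exact: dual_ball_le_norm.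
have [g [g_box g_cl]] := @tychonoff X (fun=> R) _
  (fun x => @segment_compact R (- `|x|) `|x|) F FF F_box.
have gS S : B S -> wclosure S g.
  move=> BS n xs eps e0; have FS : F S by exists S.
  by have [h [Sh hg]] := g_cl S _ FS (nbhs_wbox g xs e0); exists h.
exists g => //; apply: lin_contraction_dual_ball.
  exact: wclosure_ball_lin (wclosureS (B_ball _ BS0).2 _ (gS _ BS0)).
by move=> x; have := g_box x; rewrite /= in_itv /= -ler_norml.
Qed.

End WeakStar.

Section KreinMilman.
Context {R : realType} {X : normedModType R}.

Definition wclosed (C : set (X -> R)) := forall g, dual_ball g -> wclosure C g -> C g.

Definition extremal (C : set (X -> R)) := C `<=` dual_ball /\
  forall g h1 h2, C g -> dual_ball h1 -> dual_ball h2 ->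
    (forall x, g x = (h1 x + h2 x) / 2) -> C h1 /\ C h2.

Definition closed_extremal (C : set (X -> R)) := [/\ wclosed C, extremal C & C !=set0].

Definition maxface (C : set (X -> R)) (x : X) := [set h | C h /\ forall k, C k -> k x <= h x].

Lemma closed_extremal_ball : closed_extremal (@dual_ball R X).
Proof.
split => //; first by split => // g h1 h2 _ b1 b2 _.
exists (fun=> 0); apply: lin_contraction_dual_ball.
  by move=> a x y; rewrite mulr0 addr0.
by move=> x; rewrite normr0.
Qed.

Lemma wclosed_maxface {C} x : wclosed C -> wclosed (maxface C x).
Proof.
move=> C_cl h hb h_cl.
have face_sub : maxface C x `<=` C by move=> k [].
split => [|k Ck]; first exact: C_cl hb (wclosureS face_sub h h_cl).
apply/ler_addgt0Pr => eps e0.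
have [h' [_ h'_max] h'h] := wclosure_eval x h_cl e0.
by have := h'_max k Ck; move: h'h; rewrite ltr_norml; lra.
Qed.

Lemma extremal_maxface {C} x : extremal C -> extremal (maxface C x).
Proof.
move=> [Cb C_ext]; split; first by move=> h [/Cb].
move=> g h1 h2 [gC g_max] b1 b2 g_avg.
have [C1 C2] := C_ext _ _ _ gC b1 b2 g_avg.
have := g_max _ C1; have := g_max _ C2; have := g_avg x => e1 e2 e3.
have h1x : h1 x = g x by lra.
have h2x : h2 x = g x by lra.
by split; split => // k Ck; [rewrite h1x|rewrite h2x]; exact: g_max.
Qed.

Lemma maxface_nonempty {C} x : closed_extremal C -> maxface C x !=set0.
Proof.
move=> [C_cl [Cb _] [k0 Ck0]].
pose E := [set v : R | exists2 k, C k & v = k x].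
have E_sup : has_sup E.
  split; first by exists (k0 x), k0.
  exists `|x| => _ [k Ck ->]; exact: le_trans (ler_norm _) (dual_ball_le_norm x (Cb _ Ck)).
pose near_max d := [set k | C k /\ sup E - d < k x].
have [|||g gb g_cl] := alaoglu_directed (near_max @` [set d : R | 0 < d]).
- by exists (near_max 1); exists 1; rewrite /= ?ltr01.
- move=> _ [d d0 <-]; split; last by move=> k [/Cb].
  by have [_ [k Ck ->] kE] := sup_adherent d0 E_sup; exists k.
- move=> _ _ [d1 d10 <-] [d2 d20 <-]; exists (near_max (Order.min d1 d2)).
    by exists (Order.min d1 d2) => //; rewrite /= lt_min d10 d20.
  move=> k [Ck hk]; split; split => //; apply: le_lt_trans hk.
    by rewrite lerD2l lerN2 ge_min lexx.
  by rewrite lerD2l lerN2 ge_min lexx orbT.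
have near_cl d : 0 < d -> wclosure (near_max d) g by move=> d0; apply: g_cl; exists d.
have near_sub : near_max 1 `<=` C by move=> k [].
exists g; split => [|k Ck]; first exact: C_cl gb (wclosureS near_sub g (near_cl 1 ltr01)).
have kE : k x <= sup E by apply: ub_le_sup; [exact: E_sup.2|exists k].
apply: le_trans kE _; apply/ler_addgt0Pr => eps e0.
have e2 : 0 < eps / 2 by rewrite divr_gt0.
have [h [_ hE] hg] := wclosure_eval x (near_cl _ e2) e2.
by move: hg; rewrite ltr_norml; lra.
Qed.

Lemma closed_extremal_maxface {C} x : closed_extremal C -> closed_extremal (maxface C x).
Proof.
move=> hC; have [C_cl C_ext _] := hC.
by split; [exact: wclosed_maxface|exact: extremal_maxface|exact: maxface_nonempty].
Qed.

Lemma closed_extremal_bigcap (A : set (set (X -> R))) : A !=set0 ->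
  A `<=` closed_extremal -> total_on A (@subset _) -> closed_extremal (\bigcap_(C in A) C).
Proof.
move=> [C0 AC0] A_ce A_tot; split.
- move=> h hb h_cl C A_C; have [C_cl _ _] := A_ce _ A_C.
  by apply: C_cl hb (wclosureS _ h h_cl) => k; apply.
- split; first by move=> h hA; have [_ [Cb _] _] := A_ce _ AC0; exact: Cb (hA _ AC0).
  move=> g h1 h2 gA b1 b2 g_avg; split => C A_C; have [_ [_ C_ext] _] := A_ce _ A_C;
    by have [] := C_ext _ _ _ (gA _ A_C) b1 b2 g_avg.
- have [|||g gb g_cl] := alaoglu_directed A.
  + by exists C0.
  + by move=> C /A_ce[_ [C_ball _] C_ne].
  + move=> C D A_C A_D; case: (A_tot _ _ A_C A_D) => [CD|DC].
      by exists C => // k Ck; split => //; exact: CD.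
    by exists D => // k Dk; split => //; exact: DC.
  by exists g => C A_C; have [C_cl _ _] := A_ce _ A_C; exact: C_cl gb (g_cl _ A_C).
Qed.

Lemma ex_minimal_closed_extremal {C} : closed_extremal C ->
  exists2 M, closed_extremal M /\ M `<=` C &
    forall N, closed_extremal N -> N `<=` M -> M `<=` N.
Proof.
move=> hC; have [||||M [hM MC] M_min] :=
  @ex_minimal _ [set M | closed_extremal M /\ M `<=` C] (@subset _).
- by exists C; split; last exact: subset_refl.
- by move=> M; exact: subset_refl.
- by move=> M1 M2 M3; exact: subset_trans.
- move=> A A_sub [C0 AC0] A_tot; exists (\bigcap_(D in A) D); last by move=> D AD k; apply.
  split; last by move=> k kA; exact: (A_sub _ AC0).2 (kA _ AC0).
  by apply: closed_extremal_bigcap => // [|D /A_sub[]]; first by exists C0.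
exists M => // N hN NM; apply: M_min => //; split => //; exact: subset_trans MC.
Qed.

Lemma minimal_closed_extremal_Ext {M} : closed_extremal M ->
  (forall N, closed_extremal N -> N `<=` M -> M `<=` N) -> M `<=` Ext_dual_ball.
Proof.
move=> hM M_min.
have M_eq e e' : M e -> M e' -> e = e'.
  move=> Me Me'; apply: funext => x.
  have M_max : M `<=` maxface M x by apply: M_min; [exact: closed_extremal_maxface|move=> k []].
  have [_ e_max] := M_max _ Me; have [_ e'_max] := M_max _ Me'.
  by apply/eqP; rewrite eq_le (e'_max _ Me) (e_max _ Me').
have [_ [Mb M_ext] _] := hM.
move=> e Me; split; first exact: Mb.
move=> g h gb hb e_avg; have [Mg Mh] := M_ext _ _ _ Me gb hb e_avg.
by rewrite -(M_eq _ _ Me Mg) (M_eq _ _ Me Mh).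
Qed.

Lemma closed_extremal_Ext {C} : closed_extremal C -> exists2 e, C e & Ext_dual_ball e.
Proof.
move=> hC; have [M [hM MC] M_min] := ex_minimal_closed_extremal hC.
have [_ _ [e Me]] := hM.
by exists e; [exact: MC|exact: minimal_closed_extremal_Ext hM M_min e Me].
Qed.

Lemma Ext_dual_ball_norming (w : X) : exists2 e, Ext_dual_ball e & e w = `|w|.
Proof.
have [e [eb e_max] Ee] := closed_extremal_Ext (closed_extremal_maxface w closed_extremal_ball).
have [g gb gw] := hahn_banach_norming w.
exists e => //; apply/eqP; rewrite eq_le; apply/andP; split.
  exact: le_trans (ler_norm _) (dual_ball_le_norm w eb).
by rewrite -gw; exact: e_max.
Qed.

End KreinMilman.

Section Slices.
Context {R : realType} {X : normedModType R}.

Lemma finite_Ext_ge (r s : R) (x : X) :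
  (forall f : X -> R, wstar_acc Ext_dual_ball f -> dnorm f <= r) -> r < s -> `|x| <= 1 ->
  finite_set [set e | Ext_dual_ball e /\ s <= e x].
Proof.
move=> acc_le rs x1; set A := [set e | _ /\ _]; apply: contrapT => A_inf.
have A_ball : A `<=` dual_ball by move=> e [[]].
have [|||g gb g_cl] := alaoglu_directed [set A `\` F | F in finite_set].
- by exists A, set0; [exact: finite_set0|exact: setD0].
- move=> _ [F F_fin <-]; split; last by move=> e [/A_ball].
  exact/infinite_setN0/infinite_setD.
- move=> _ _ [F1 F1_fin <-] [F2 F2_fin <-]; exists (A `\` (F1 `|` F2)).
    by exists (F1 `|` F2); rewrite ?finite_setU.
  by rewrite setDUr; exact: subset_refl.
have gAg : wclosure (A `\` [set g]) g by apply: g_cl; exists [set g]; [exact: finite_set1|].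
have g_acc : wstar_acc Ext_dual_ball g.
  split; first by case: gb.
  by move=> n xs eps e0; have [h [[Eh _] hg] h_near] := gAg n xs eps e0; exists h.
have gA : wclosure A g by apply: g_cl; exists set0; [exact: finite_set0|exact: setD0].
have gx : s <= g x.
  apply/ler_addgt0Pr => eps e0; have [h [_ hs] hg] := wclosure_eval x gA e0.
  by move: hg; rewrite ltr_norml; lra.
by have := acc_le _ g_acc; have := ler_dnorm gb.1 x1; have := ler_norm (g x); lra.
Qed.

Lemma segment_in_ball (s c : R) (x y : X) : `|x| <= 1 -> `|y| <= 1 ->
  (forall e, Ext_dual_ball e -> s <= e x -> e y = 0) -> `|c| <= 1 - s ->
  `|x + c *: y| <= 1.
Proof.
move=> x1 y1 y_ker c_le; have [e Ee <-] := Ext_dual_ball_norming (x + c *: y).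
have el := Ext_dual_ball_lin Ee; rewrite linD // linZ //.
have ex1 := le_trans (ler_norm _) (le_trans (dual_ball_le_norm x Ee.1) x1).
have [sx|xs] := leP s (e x); first by rewrite y_ker // mulr0 addr0.
have : `|c * e y| <= 1 - s.
  rewrite normrM -[leRHS]mulr1; apply: ler_pM => //.
  exact: le_trans (dual_ball_le_norm y Ee.1) y1.
by have := ler_norm (c * e y); lra.
Qed.

Lemma slice_nonempty {f : X -> R} {alpha : R} : is_dual f -> 0 < alpha -> slice f alpha !=set0.
Proof.
move=> fd alpha0; have [fl _] := fd.
have [|_ [x [x1 ->]] fx] := sup_adherent alpha0 (_ : has_sup [set r : R | exists x : X, `|x| <= 1 /\ r = `|f x|]).
  by split; [exists `|f 0|, 0; rewrite normr0 ler01|exact: has_ubound_dnorm].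
have [fx0|fx0] := leP 0 (f x).
  by exists x; split => //; rewrite -(ger0_norm fx0).
by exists (- x); split; [rewrite normrN|rewrite linN // -(ltr0_norm fx0)].
Qed.

Lemma le_diam {S : set X} {M : R} {u v : X} : S `<=` [set x | `|x| <= M] ->
  S u -> S v -> `|u - v| <= diam S.
Proof.
move=> SM Su Sv; apply: ub_le_sup; last by exists u, v.
exists (M + M) => _ [a [b [Sa [Sb ->]]]].
exact: le_trans (ler_normB a b) (lerD (SM _ Sa) (SM _ Sb)).
Qed.

End Slices.

Theorem proposition2p2 (R : realType) (X : completeNormedModType R) :
  ~ @finite_dimensional R X ->
  @II_polyhedral R X ->
  exists delta : R, 0 < delta /\
    forall (f : X -> R) (alpha : R),
      is_dual f -> f <> (fun _ => 0) -> 0 < alpha ->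
      delta <= diam (slice f alpha).
Proof.
move=> nfd [r [/andP[r0 r1] acc_le]].
exists (1 - r); split => [|f alpha fd _ alpha0]; first by rewrite subr_gt0.
have [fl _] := fd.
have [x [x1 fx]] := slice_nonempty fd alpha0.
pose s := (1 + r) / 2; have rs : r < s by rewrite /s; lra.
set E := [set e | Ext_dual_ball e /\ s <= e x].
have [y y1 y_ker] : exists2 y : X, `|y| = 1 & forall l, (f |` E) l -> l y = 0.
  apply: ex_unit_common_ker => //.
    by rewrite finite_setU; split; [exact: finite_set1|exact: finite_Ext_ge acc_le rs x1].
  by move=> l [->|[El _]]; [exact: fl|exact: Ext_dual_ball_lin].
have fy : f y = 0 by apply: y_ker; left.
have in_slice c : `|c| <= 1 - s -> slice f alpha (x + c *: y).
  move=> c_le; split; last by rewrite linD // linZ // fy mulr0 addr0.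
  by apply: segment_in_ball x1 _ _ c_le => [|e Ee sx]; [rewrite y1|apply: y_ker; right].
have c_le : `|1 - s| <= 1 - s by rewrite ger0_norm // subr_ge0 /s; lra.
have c'_le : `|s - 1| <= 1 - s by rewrite distrC.
have slice_ball : slice f alpha `<=` [set z | `|z| <= 1] by move=> z [].
apply: le_trans (le_diam slice_ball (in_slice _ c_le) (in_slice _ c'_le)).
rewrite opprD addrACA subrr add0r -scalerBl normrZ y1 mulr1 ger0_norm /s; lra.
Qed.
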